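(* Let $C$ be a contractible globular extension with a pregroupoidal structure and $G$ an $\infty$-groupoid of type $C$. For every $n\ge 1$, $\Pi_n(G)$ is a groupoid.
   Context: The globe category $\mathbb{G}$ has objects $D_n$ ($n\ge0$), generated by $\sigma_n,\tau_n\colon D_{n-1}\to D_n$ ($n\ge1$) with $\sigma_{n+1}\sigma_n=\tau_{n+1}\sigma_n$, $\sigma_{n+1}\tau_n=\tau_{n+1}\tau_n$; $\sigma^i_j=\sigma_i\cdots\sigma_{j+1}$, $\tau^i_j=\tau_i\cdots\tau_{j+1}$. A table of dimensions: integers $i_1,\dots,i_n,i'_1,\dots,i'_{n-1}$ with $i_k>i'_k<i_{k+1}$; dimension = largest entry. In a category $C$ under $\mathbb{G}$, its globular sum is the colimit of $D_{i_1}\xleftarrow{\sigma^{i_1}_{i'_1}}D_{i'_1}\xrightarrow{\tau^{i_2}_{i'_1}}D_{i_2}\leftarrow\cdots\xrightarrow{\tau^{i_n}_{i'_{n-1}}}D_{i_n}$, written $D_{i_1}\amalg_{D_{i'_1}}\cdots\amalg_{D_{i'_{n-1}}}D_{i_n}$. A globular extension is a category under $\mathbb{G}$ with all globular sums. $f,g\colon D_n\to X$ are globularly parallel if $n=0$ or $f\sigma_n=g\sigma_n$, $f\tau_n=g\tau_n$; a lifting of $(f,g)$ is $h\colon D_{n+1}\to X$ with $h\sigma_{n+1}=f$, $h\tau_{n+1}=g$; $(f,g)\colon D_n\to S$ is admissible if globularly parallel with $S$ a globular sum of dimension $\le n+1$; $C$ is contractible if every admissible pair has a lifting. An $\infty$-groupoid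 of type $C$ is a presheaf $G$ on $C$ such that each canonical map $G(D_{i_1}\amalg_{D_{i'_1}}\cdots\amalg_{D_{i'_{n-1}}}D_{i_n})\to G_{i_1}\times_{G_{i'_1}}\cdots\times_{G_{i'_{n-1}}}G_{i_n}$ is bijective, where $G_i=G(D_i)$ ($i$-arrows), $s=G(\sigma_i)$, $t=G(\tau_i)$ (source, target), $s^i_j=G(\sigma^i_j)$, $t^i_j=G(\tau^i_j)$, and the fiber product consists of $(u_1,\dots,u_n)$ with $s^{i_k}_{i'_k}(u_k)=t^{i_{k+1}}_{i'_k}(u_{k+1})$. A pregroupoidal structure on $C$ consists of morphisms $\nabla^i_j\colon D_i\to D_i\amalg_{D_j}D_i$ ($i>j\ge0$), $\kappa_i\colon D_{i+1}\to D_i$, $w^i_j\colon D_i\to D_i$ with $\nabla^i_{i-1}\sigma_i=\epsilon_2\sigma_i$, $\nabla^i_{i-1}\tau_i=\epsilon_1\tau_i$ ($\epsilon_1,\epsilon_2$ the canonical inclusions of the first and second summand), $\nabla^i_j\sigma_i=(\sigma_i\amalg_{D_j}\sigma_i)\nabla^{i-1}_j$, $\nabla^i_j\tau_i=(\tau_i\amalg_{D_j}\tau_i)\nabla^{i-1}_j$ for $j<i-1$, $\kappa_i\sigma_{i+1}=\kappa_i\tau_{i+1}=\mathrm{id}$, $w^i_{i-1}\sigma_i=\tau_i$, $w^i_{i-1}\tau_i=\sigma_i$, $w^i_j\sigma_i=\sigma_iw^{i-1}_j$, $w^i_j\tau_i=\tau_iw^{i-1}_j$ for $j<i-1$. It induces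 on $G$: compositions $v\ast^i_ju=G(\nabla^i_j)(\xi)$ for $s^i_j(v)=t^i_j(u)$, $\xi$ corresponding to $(v,u)$; units $k_i=G(\kappa_i)\colon G_i\to G_{i+1}$. For $n$-arrows $u,v$, $u\sim v$ if some $(n+1)$-arrow has source $u$ and target $v$; this is an equivalence relation compatible with $\ast^n_{n-1}$. $\Pi_n(G)$ ($n\ge1$) is the graph with objects $G_{n-1}$, arrows $G_n/\sim$ with source/target induced by $s,t$, composition induced by $\ast^n_{n-1}$ and identities induced by $k_{n-1}$. *)

From Stdlib Require Import ClassicalEpsilon.
From mathcomp Require Import all_boot.

Set Implicit Arguments.
Unset Strict Implicit.
Unset Printing Implicit Defensive.

Record category := Category {
  ob :> Type;
  hom : ob -> ob -> Type;
  idm : forall a, hom a a;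
  comp : forall x y z, hom y z -> hom x y -> hom x z;
  comp_id_l : forall a b (f : hom a b), comp (idm b) f = f;
  comp_id_r : forall a b (f : hom a b), comp f (idm a) = f;
  comp_assoc : forall a b c d (h : hom c d) (g : hom b c) (f : hom a b),
      comp h (comp g f) = comp (comp h g) f }.
Arguments hom {_} _ _.
Arguments idm {_} _.
Arguments comp {_ _ _ _} _ _.

(* A category under the globe category G: a functor G -> C, i.e. objects
   D n and morphisms gsig n = sigma_{n+1}, gtau n = tau_{n+1} : D n -> D (n+1)
   satisfying the globular relations. *)
Record under_globe (C : category) := UnderGlobe {
  D : nat -> C;
  gsig : forall n, hom (D n) (D n.+1);
  gtau : forall n, hom (D n) (D n.+1);
  glob_s : forall n, comp (gsig n.+1) (gsig n) = comp (gtau n.+1) (gsig n);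
  glob_t : forall n, comp (gsig n.+1) (gtau n) = comp (gtau n.+1) (gtau n) }.
Arguments D {C} _ _.
Arguments gsig {C} _ _.
Arguments gtau {C} _ _.

Section Iterated.
Variables (C : category) (Gl : under_globe C).

Fixpoint sig_it (j k : nat) : hom (D Gl j) (D Gl (k + j)) :=
  match k return hom (D Gl j) (D Gl (k + j)) with
  | 0 => idm _
  | k'.+1 => comp (gsig Gl (k' + j)) (sig_it j k')
  end.
Fixpoint tau_it (j k : nat) : hom (D Gl j) (D Gl (k + j)) :=
  match k return hom (D Gl j) (D Gl (k + j)) with
  | 0 => idm _
  | k'.+1 => comp (gtau Gl (k' + j)) (tau_it j k')
  end.

Definition sigm (j i : nat) (h : j <= i) : hom (D Gl j) (D Gl i) :=
  ecast m (hom (D Gl j) (D Gl m)) (subnK h) (sig_it j (i - j)).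
Definition taum (j i : nat) (h : j <= i) : hom (D Gl j) (D Gl i) :=
  ecast m (hom (D Gl j) (D Gl m)) (subnK h) (tau_it j (i - j)).
End Iterated.

(* Tables of dimensions: tops i_1..i_n are top 0 .. top tlen,          *)
(* bottoms i'_1..i'_{n-1} are bot 0 .. bot (tlen-1);  n = tlen + 1.    *)
Record table := Table { tlen : nat; top : nat -> nat; bot : nat -> nat }.

Definition valid_table (T : table) : Prop :=
  forall k, k < tlen T -> bot T k < top T k /\ bot T k < top T k.+1.

(* dimension = largest entry (the bottoms are smaller than the tops) *)
Definition tdim (T : table) : nat := \max_(k < (tlen T).+1) top T k.

(* the table  (i ; j ; i), giving D_i  amalg_{D_j} D_i *)
Definition tbl2 (i j : nat) : table := Table 1 (fun _ => i) (fun _ => j).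

Section Cocones.
Variables (C : category) (Gl : under_globe C).

(* cocones on the diagram D_{i1} <- D_{i'1} -> D_{i2} <- ... -> D_{in} *)
Definition is_cocone (T : table) (X : C)
    (u : forall k, hom (D Gl (top T k)) X) : Prop :=
  forall k (h1 : bot T k <= top T k) (h2 : bot T k <= top T k.+1),
    k < tlen T -> comp (u k) (sigm Gl h1) = comp (u k.+1) (taum Gl h2).
End Cocones.

(* A globular extension: a category under G with (chosen) globular sums,
   i.e. colimits of all the diagrams associated to tables. *)
Record glob_ext (C : category) := GlobExt {
  gl :> under_globe C;
  gsum : table -> C;
  ginj : forall T k, hom (D gl (top T k)) (gsum T);
  gfact : forall T (X : C), (forall k, hom (D gl (top T k)) X) -> hom (gsum T) X;
  gsum_cocone : forall T, valid_table T -> @is_cocone C gl T (gsum T) (ginj T);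
  gfact_comm : forall T, valid_table T -> forall X u, @is_cocone C gl T X u ->
      forall k, k <= tlen T -> comp (gfact u) (ginj T k) = u k;
  gfact_uniq : forall T, valid_table T -> forall X (f g : hom (gsum T) X),
      (forall k, k <= tlen T -> comp f (ginj T k) = comp g (ginj T k)) -> f = g }.
Arguments gsum {C} _ _.
Arguments ginj {C} _ _ _.
Arguments gfact {C} _ _ _ _.

Section Contractible.
Variables (C : category) (E : glob_ext C).

Definition glob_parallel (n : nat) (X : C) (f g : hom (D E n) X) : Prop :=
  match n return hom (D E n) X -> hom (D E n) X -> Prop with
  | 0 => fun _ _ => True
  | m.+1 => fun f g => comp f (gsig E m) = comp g (gsig E m) /\
                       comp f (gtau E m) = comp g (gtau E m)
  end f g.

Definition is_lifting (n : nat) (X : C) (f g : hom (D E n) X)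
    (h : hom (D E n.+1) X) : Prop :=
  comp h (gsig E n) = f /\ comp h (gtau E n) = g.

Definition contractible : Prop :=
  forall (n : nat) (T : table), valid_table T -> tdim T <= n.+1 ->
  forall f g : hom (D E n) (gsum E T), glob_parallel f g ->
  exists h, is_lifting f g h.

Definition amalg_sig (i j : nat) : hom (gsum E (tbl2 i j)) (gsum E (tbl2 i.+1 j)) :=
  gfact E (tbl2 i j) _
    (fun k => comp (ginj E (tbl2 i.+1 j) k : hom (D E i.+1) _) (gsig E i)).
Definition amalg_tau (i j : nat) : hom (gsum E (tbl2 i j)) (gsum E (tbl2 i.+1 j)) :=
  gfact E (tbl2 i j) _
    (fun k => comp (ginj E (tbl2 i.+1 j) k : hom (D E i.+1) _) (gtau E i)).

Definition eps1 (i j : nat) : hom (D E i) (gsum E (tbl2 i j)) := ginj E (tbl2 i j) 0.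
Definition eps2 (i j : nat) : hom (D E i) (gsum E (tbl2 i j)) := ginj E (tbl2 i j) 1.
End Contractible.

(* Pregroupoidal structure (indices shifted: the paper's sigma_{i+1} is gsig i). *)
Record pregroupoidal (C : category) (E : glob_ext C) := Pregroupoidal {
  nabla : forall i j, j < i -> hom (D E i) (gsum E (tbl2 i j));
  kappa : forall i, hom (D E i.+1) (D E i);
  wrev : forall i j, j < i -> hom (D E i) (D E i);
  nabla_top_s : forall i,
    comp (nabla (ltnSn i)) (gsig E i) = comp (eps2 E i.+1 i) (gsig E i);
  nabla_top_t : forall i,
    comp (nabla (ltnSn i)) (gtau E i) = comp (eps1 E i.+1 i) (gtau E i);
  nabla_s : forall i j (h : j < i.+1) (h' : j < i),
    comp (nabla h) (gsig E i) = comp (amalg_sig E i j) (nabla h');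
  nabla_t : forall i j (h : j < i.+1) (h' : j < i),
    comp (nabla h) (gtau E i) = comp (amalg_tau E i j) (nabla h');
  kappa_s : forall i, comp (kappa i) (gsig E i) = idm (D E i);
  kappa_t : forall i, comp (kappa i) (gtau E i) = idm (D E i);
  wrev_top_s : forall i, comp (wrev (ltnSn i)) (gsig E i) = gtau E i;
  wrev_top_t : forall i, comp (wrev (ltnSn i)) (gtau E i) = gsig E i;
  wrev_s : forall i j (h : j < i.+1) (h' : j < i),
    comp (wrev h) (gsig E i) = comp (gsig E i) (wrev h');
  wrev_t : forall i j (h : j < i.+1) (h' : j < i),
    comp (wrev h) (gtau E i) = comp (gtau E i) (wrev h') }.
Arguments nabla {C E} _ {i j} _.
Arguments kappa {C E} _ _.

Record presheaf (C : category) := Presheaf {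
  pob :> C -> Type;
  pmap : forall a b, hom a b -> pob b -> pob a;
  pmap_id : forall a x, pmap (idm a) x = x;
  pmap_comp : forall a b c (g : hom b c) (f : hom a b) x,
      pmap (comp g f) x = pmap f (pmap g x) }.
Arguments pmap {C} _ {a b} _ _.

Section Groupoid.
Variables (C : category) (E : glob_ext C) (G : presheaf C).

Definition in_fiber_product (T : table) (u : forall k, G (D E (top T k))) : Prop :=
  forall k (h1 : bot T k <= top T k) (h2 : bot T k <= top T k.+1),
    k < tlen T -> pmap G (sigm E h1) (u k) = pmap G (taum E h2) (u k.+1).

(* the canonical map G(S) -> fiber product is bijective, for every table *)
Definition is_infty_groupoid : Prop :=
  forall T, valid_table T ->
    (forall x y : G (gsum E T),
        (forall k, k <= tlen T -> pmap G (ginj E T k) x = pmap G (ginj E T k) y) ->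
        x = y) /\
    (forall u, in_fiber_product u ->
        exists x : G (gsum E T), forall k, k <= tlen T -> pmap G (ginj E T k) x = u k).

Variable P : pregroupoidal E.

Definition src (n : nat) : G (D E n.+1) -> G (D E n) := pmap G (gsig E n).
Definition tgt (n : nat) : G (D E n.+1) -> G (D E n) := pmap G (gtau E n).

Definition comp_rel (i j : nat) (h : j < i) (v u w : G (D E i)) : Prop :=
  exists xi : G (gsum E (tbl2 i j)),
    pmap G (eps1 E i j) xi = v /\ pmap G (eps2 E i j) xi = u /\
    w = pmap G (nabla P h) xi.

(* the composite v *^i_j u (well defined, by bijectivity, when s^i_j v = t^i_j u) *)
Definition gcomp (i j : nat) (h : j < i) (v u : G (D E i)) : G (D E i) :=
  epsilon (inhabits v) (comp_rel h v u).

Definition vcomp (m : nat) (v u : G (D E m.+1)) : G (D E m.+1) :=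
  gcomp (ltnSn m) v u.
Definition unit (m : nat) : G (D E m) -> G (D E m.+1) := pmap G (kappa P m).

Definition sim (n : nat) (u v : G (D E n)) : Prop :=
  exists x : G (D E n.+1), src x = u /\ tgt x = v.

(* Pi_{m+1}(G): objects G_m, arrows G_{m+1}/~, source/target induced by s,t,
   composition induced by *^{m+1}_m, identities induced by k_m.
   "Pi_{m+1}(G) is a groupoid": the structure is well defined on classes and
   satisfies the category axioms, and every arrow is invertible. *)
Definition Pi_is_groupoid (m : nat) : Prop :=
  let S : G (D E m.+1) -> G (D E m.+1) -> Prop := @sim m.+1 in
  (forall u, S u u) /\
  (forall u v, S u v -> S v u) /\
  (forall u v w, S u v -> S v w -> S u w) /\
  (forall u v, S u v -> src u = src v /\ tgt u = tgt v) /\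
  (forall u u' v v', src v = tgt u -> src v' = tgt u' ->
     S u u' -> S v v' -> S (vcomp v u) (vcomp v' u')) /\
  (forall u v : G (D E m.+1), src v = tgt u ->
     src (vcomp v u) = src u /\ tgt (vcomp v u) = tgt v) /\
  (forall x : G (D E m), src (unit x) = x /\ tgt (unit x) = x) /\
  (forall u v w, src v = tgt u -> src w = tgt v ->
     S (vcomp w (vcomp v u)) (vcomp (vcomp w v) u)) /\
  (forall u, S (vcomp (unit (tgt u)) u) u /\ S (vcomp u (unit (src u))) u) /\
  (forall u, exists v, src v = tgt u /\ tgt v = src u /\
     S (vcomp v u) (unit (src u)) /\ S (vcomp u v) (unit (tgt u))).

End Groupoid.

(* Every statement about ~ is reduced to contractibility: two "formal" m+1-arrows,
   i.e. morphisms f, g : D_{m+1} -> S into a globular sum S of dimension <= m+2 with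
   the same source and target, admit a lifting h : D_{m+2} -> S, and evaluating
   f, g, h on an element xi of G(S) gives (G f xi) ~ (G g xi) (lemma [lifting_sim]).
   Since G turns globular sums into fiber products, any configuration of composable
   arrows of G is the image of one element xi of G(S), and the composite
   v *_m u is the value at xi of the formal composite (v,u) o nabla
   ([vcomp_formal]).  Hence each groupoid law only requires checking that two
   formal composites are globularly parallel, which follows from the axioms of the
   pregroupoidal structure ([formal_composite_sim], [formal_composites_sim]). *)
From Stdlib Require Import ClassicalEpsilon.
From mathcomp Require Import all_boot.

Set Implicit Arguments.
Unset Strict Implicit.
Unset Printing Implicit Defensive.

Section IteratedGlobes.
Variables (C : category) (Gl : under_globe C).

Lemma sigm_iter j k (h : j <= k + j) : sigm Gl h = sig_it Gl j k.
Proof.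
rewrite /sigm; move: (subnK h); rewrite addnK => e.
by rewrite (eq_irrelevance e erefl).
Qed.

Lemma taum_iter j k (h : j <= k + j) : taum Gl h = tau_it Gl j k.
Proof.
rewrite /taum; move: (subnK h); rewrite addnK => e.
by rewrite (eq_irrelevance e erefl).
Qed.

Lemma sigm1 j (h : j <= j.+1) : sigm Gl h = gsig Gl j.
Proof. by rewrite (@sigm_iter j 1 h) /= comp_id_r. Qed.

Lemma taum1 j (h : j <= j.+1) : taum Gl h = gtau Gl j.
Proof. by rewrite (@taum_iter j 1 h) /= comp_id_r. Qed.

Lemma sigm2 j (h : j <= j.+2) : sigm Gl h = comp (gsig Gl j.+1) (gsig Gl j).
Proof. by rewrite (@sigm_iter j 2 h) /= comp_id_r. Qed.

Lemma taum2 j (h : j <= j.+2) : taum Gl h = comp (gtau Gl j.+1) (gtau Gl j).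
Proof. by rewrite (@taum_iter j 2 h) /= comp_id_r. Qed.
End IteratedGlobes.

(* The tables D_i, D_i amalg_{D_j} D_i and D_i amalg_{D_j} D_i amalg_{D_j} D_i. *)
Definition tbl1 (i : nat) : table := Table 0 (fun _ => i) (fun _ => i).
Definition tbl3 (i j : nat) : table := Table 2 (fun _ => i) (fun _ => j).

Lemma valid_tbl1 i : valid_table (tbl1 i).
Proof. by []. Qed.

Lemma valid_tbl2 i j : j < i -> valid_table (tbl2 i j).
Proof. by move=> h k. Qed.

Lemma valid_tbl3 i j : j < i -> valid_table (tbl3 i j).
Proof. by move=> h k. Qed.

Lemma tdim_le T i : (forall k, top T k <= i) -> tdim T <= i.
Proof. by move=> h; apply/bigmax_leqP => k _. Qed.

Section BinarySums.
Variables (C : category) (E : glob_ext C).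

Definition copair (X : C) i j (a b : hom (D E i) X) : hom (gsum E (tbl2 i j)) X :=
  gfact E (tbl2 i j) X (fun k => if k is 0 then a else b).

Lemma copair_eps X i (a b : hom (D E i.+1) X) :
  comp a (gsig E i) = comp b (gtau E i) ->
  comp (copair i a b) (eps1 E i.+1 i) = a /\ comp (copair i a b) (eps2 E i.+1 i) = b.
Proof.
move=> hab; have hv := valid_tbl2 (ltnSn i).
have hc : is_cocone (T := tbl2 i.+1 i) (fun k => if k is 0 then a else b).
  by move=> [|k] h1 h2 //= _; rewrite sigm1 taum1.
by split; [exact: (gfact_comm hv hc (k := 0)) | exact: (gfact_comm hv hc (k := 1))].
Qed.

Variable P : pregroupoidal E.

Definition formal_comp (X : C) i (a b : hom (D E i.+1) X) : hom (D E i.+1) X :=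
  comp (copair i a b) (nabla P (ltnSn i)).

Lemma formal_comp_st X i (a b : hom (D E i.+1) X) :
  comp a (gsig E i) = comp b (gtau E i) ->
  comp (formal_comp a b) (gsig E i) = comp b (gsig E i) /\
  comp (formal_comp a b) (gtau E i) = comp a (gtau E i).
Proof.
move=> hab; have [e1 e2] := copair_eps hab.
by rewrite /formal_comp -!comp_assoc nabla_top_s nabla_top_t !comp_assoc e1 e2.
Qed.

Lemma kappa_sec X i (f : hom (D E i) X) :
  comp (comp f (kappa P i)) (gsig E i) = f /\ comp (comp f (kappa P i)) (gtau E i) = f.
Proof. by rewrite -!comp_assoc kappa_s kappa_t !comp_id_r. Qed.

Lemma wrev_swap X i (f : hom (D E i.+1) X) :
  comp (comp f (wrev P (ltnSn i))) (gsig E i) = comp f (gtau E i) /\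
  comp (comp f (wrev P (ltnSn i))) (gtau E i) = comp f (gsig E i).
Proof. by rewrite -!comp_assoc wrev_top_s wrev_top_t. Qed.
End BinarySums.

Section InfinityGroupoid.
Variables (C : category) (E : glob_ext C) (G : presheaf C).
Hypothesis HG : is_infty_groupoid E G.

Lemma pmapM a b c (g : hom b c) (f : hom a b) x : pmap G (comp g f) x = pmap G f (pmap G g x).
Proof. exact: pmap_comp. Qed.

Lemma src_tgt_glob m (x : G (D E m.+2)) : src (src x) = src (tgt x) /\ tgt (src x) = tgt (tgt x).
Proof. by rewrite /src /tgt -!pmapM glob_s glob_t. Qed.

Lemma pair_sep i j (h : j < i) (x y : G (gsum E (tbl2 i j))) :
  pmap G (eps1 E i j) x = pmap G (eps1 E i j) y ->
  pmap G (eps2 E i j) x = pmap G (eps2 E i j) y -> x = y.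
Proof. by move=> e1 e2; apply: (HG (valid_tbl2 h)).1 => -[|[|k]]. Qed.

Lemma pair_glue i j (h : j < i) (a b : G (D E i)) :
  pmap G (sigm E (ltnW h)) a = pmap G (taum E (ltnW h)) b ->
  exists xi : G (gsum E (tbl2 i j)), pmap G (eps1 E i j) xi = a /\ pmap G (eps2 E i j) xi = b.
Proof.
move=> e; have [|xi Hxi] := (HG (valid_tbl2 h)).2 (fun k => if k is 0 then a else b).
  by move=> [|k] h1 h2 //= _; rewrite (eq_irrelevance h1 (ltnW h)) (eq_irrelevance h2 (ltnW h)).
by exists xi; split; [exact: (Hxi 0) | exact: (Hxi 1)].
Qed.

Lemma single_glue i (u : G (D E i)) :
  exists xi : G (gsum E (tbl1 i)), pmap G (ginj E (tbl1 i) 0) xi = u.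
Proof.
have [xi H] := (HG (@valid_tbl1 i)).2 (fun _ => u) (fun k _ _ h => ltac:(done)).
by exists xi; exact: (H 0).
Qed.

Lemma triple_glue m (u v w : G (D E m.+1)) : src v = tgt u -> src w = tgt v ->
  exists xi : G (gsum E (tbl3 m.+1 m)), forall k, k <= 2 ->
    pmap G (ginj E (tbl3 m.+1 m) k) xi = match k with 0 => w | 1 => v | _ => u end.
Proof.
move=> evu ewv; apply: (HG (valid_tbl3 (ltnSn m))).2.
by move=> [|[|k]] h1 h2 //= _; rewrite sigm1 taum1.
Qed.

Variable P : pregroupoidal E.

Lemma vcomp_glue m (xi : G (gsum E (tbl2 m.+1 m))) :
  vcomp P (pmap G (eps1 E m.+1 m) xi) (pmap G (eps2 E m.+1 m) xi) =
  pmap G (nabla P (ltnSn m)) xi.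
Proof.
rewrite /vcomp /gcomp; set Q := comp_rel _ _ _ _.
have ex : exists w, Q w by exists (pmap G (nabla P (ltnSn m)) xi), xi.
have [xi' [e1 [e2 ->]]] := epsilon_spec (inhabits (pmap G (eps1 E m.+1 m) xi)) Q ex.
by rewrite (pair_sep (ltnSn m) e1 e2).
Qed.

Lemma vcomp_formal m X (a b : hom (D E m.+1) X) (xi : G X) :
  comp a (gsig E m) = comp b (gtau E m) ->
  vcomp P (pmap G a xi) (pmap G b xi) = pmap G (formal_comp P a b) xi.
Proof.
move=> hab; have [e1 e2] := copair_eps hab.
by rewrite pmapM -vcomp_glue -!pmapM e1 e2.
Qed.

Lemma vcomp_st m (u v : G (D E m.+1)) : src v = tgt u ->
  src (vcomp P v u) = src u /\ tgt (vcomp P v u) = tgt v.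
Proof.
rewrite /src /tgt => e; have [xi [<- <-]] := pair_glue (h := ltnSn m) (a := v) (b := u)
  ltac:(by rewrite sigm1 taum1).
by rewrite vcomp_glue -!pmapM nabla_top_s nabla_top_t !pmapM.
Qed.

Lemma unit_st m (x : G (D E m)) : src (unit P x) = x /\ tgt (unit P x) = x.
Proof. by rewrite /src /tgt /unit -!pmapM kappa_s kappa_t !pmap_id. Qed.

Hypothesis HC : contractible E.

Lemma lifting_sim m T (hT : valid_table T) (hd : tdim T <= m.+2)
    (f g : hom (D E m.+1) (gsum E T)) :
  comp f (gsig E m) = comp g (gsig E m) -> comp f (gtau E m) = comp g (gtau E m) ->
  forall xi : G (gsum E T), sim (pmap G f xi) (pmap G g xi).
Proof.
move=> es et xi; have [h [hs ht]] := HC hT hd (conj es et).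
by exists (pmap G h xi); rewrite /src /tgt -!pmapM hs ht.
Qed.

Section FormalComposites.
Variables (m : nat) (T : table).
Hypotheses (hT : valid_table T) (hd : tdim T <= m.+2).

Lemma formal_composite_sim (a b c : hom (D E m.+1) (gsum E T)) (xi : G (gsum E T)) :
  comp a (gsig E m) = comp b (gtau E m) ->
  comp c (gsig E m) = comp b (gsig E m) -> comp c (gtau E m) = comp a (gtau E m) ->
  sim (vcomp P (pmap G a xi) (pmap G b xi)) (pmap G c xi).
Proof.
move=> hab hs ht; have [fs ft] := formal_comp_st P hab.
by rewrite vcomp_formal //; apply: lifting_sim; rewrite ?fs ?ft.
Qed.

Lemma formal_composites_sim (a b a' b' : hom (D E m.+1) (gsum E T)) (xi : G (gsum E T)) :
  comp a (gsig E m) = comp b (gtau E m) -> comp a' (gsig E m) = comp b' (gtau E m) ->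
  comp b (gsig E m) = comp b' (gsig E m) -> comp a (gtau E m) = comp a' (gtau E m) ->
  sim (vcomp P (pmap G a xi) (pmap G b xi)) (vcomp P (pmap G a' xi) (pmap G b' xi)).
Proof.
move=> hab hab' hs ht; have [fs ft] := formal_comp_st P hab'.
by rewrite [X in sim _ X]vcomp_formal //; apply: formal_composite_sim; rewrite ?fs ?ft.
Qed.
End FormalComposites.

Lemma sim_refl m (u : G (D E m)) : sim u u.
Proof. by exists (unit P u); exact: unit_st. Qed.

Lemma sim_sym m (u v : G (D E m.+1)) : sim u v -> sim v u.
Proof.
move=> [x [<- <-]]; exists (pmap G (wrev P (ltnSn m.+1)) x).
by rewrite /src /tgt -!pmapM wrev_top_s wrev_top_t.
Qed.

Lemma sim_trans m (u v w : G (D E m)) : sim u v -> sim v w -> sim u w.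
Proof.
move=> [x [xs xt]] [y [ys yt]]; exists (vcomp P y x).
by have [-> ->] := vcomp_st (etrans ys (esym xt)).
Qed.

Lemma sim_st m (u v : G (D E m.+1)) : sim u v -> src u = src v /\ tgt u = tgt v.
Proof. by move=> [x [<- <-]]; exact: src_tgt_glob. Qed.

(* ~ is compatible with composition: the witnesses x : u ~ u' and y : v ~ v' glue
   into xi in G(D_{m+2} amalg_{D_m} D_{m+2}), and both composites are values at xi
   of formal composites of the sources (resp. targets) of the two summands. *)
Lemma vcomp_sim m (u u' v v' : G (D E m.+1)) :
  src v = tgt u -> src v' = tgt u' -> sim u u' -> sim v v' ->
  sim (vcomp P v u) (vcomp P v' u').
Proof.
move=> e e' [x [xs xt]] [y [ys yt]].
have hm : m <= m.+2 by apply: leqW.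
have h2 : m < m.+2 := ltnW (ltnSn m.+1).
have bd : src (src y) = tgt (tgt x) by rewrite ys e -xs (src_tgt_glob x).2.
have [xi [e1 e2]] := pair_glue (h := h2) (a := y) (b := x)
  ltac:(by rewrite sigm2 taum2 !pmapM; exact: bd).
have coc := gsum_cocone E (valid_tbl2 h2) (k := 0) hm hm isT.
rewrite sigm2 taum2 /= in coc.
set i0 := eps1 E m.+2 m in e1 *; set i1 := eps2 E m.+2 m in e2 *.
have hA : comp (comp i0 (gsig E m.+1)) (gsig E m) = comp (comp i1 (gsig E m.+1)) (gtau E m).
  by rewrite -!comp_assoc glob_t.
have hB : comp (comp i0 (gtau E m.+1)) (gsig E m) = comp (comp i1 (gtau E m.+1)) (gtau E m).
  by rewrite -!comp_assoc -glob_s.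
rewrite -ys -xs -yt -xt -e1 -e2 /src /tgt -!pmapM.
apply: formal_composites_sim => //.
- exact: tdim_le.
- by rewrite -!comp_assoc glob_s.
- by rewrite -!comp_assoc glob_t.
Qed.

(* Associativity up to ~: glue w, v, u into one element of G(D_{m+1}^{3}) and
   compare the two formal bracketings, which are parallel. *)
Lemma vcomp_assoc_sim m (u v w : G (D E m.+1)) : src v = tgt u -> src w = tgt v ->
  sim (vcomp P w (vcomp P v u)) (vcomp P (vcomp P w v) u).
Proof.
move=> evu ewv; have hv := valid_tbl3 (ltnSn m).
have [xi Hxi] := triple_glue evu ewv.
set i0 := ginj E (tbl3 m.+1 m) 0 in Hxi *; set i1 := ginj E (tbl3 m.+1 m) 1 in Hxi *.
set i2 := ginj E (tbl3 m.+1 m) 2 in Hxi *.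
have coc k : k < 2 -> comp (ginj E (tbl3 m.+1 m) k) (gsig E m) =
    comp (ginj E (tbl3 m.+1 m) k.+1) (gtau E m).
  by move=> hk; have := gsum_cocone E hv (k := k) (leqnSn m) (leqnSn m) hk; rewrite sigm1 taum1.
have [bs bt] := formal_comp_st P (coc 1 isT).
have [ds dt] := formal_comp_st P (coc 0 isT).
rewrite -(Hxi 0 isT) -(Hxi 1 isT) -(Hxi 2 isT) -/i0 -/i1 -/i2.
rewrite (vcomp_formal xi (coc 1 isT)) (vcomp_formal xi (coc 0 isT)).
apply: (formal_composites_sim hv) => //.
- by apply: tdim_le => k; apply: leqW.
- by rewrite bt; exact: coc 0 isT.
- by rewrite ds; exact: coc 1 isT.
Qed.

(* Units: u = G(i) xi for the unique summand i, and the formal composites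
   (i tau kappa, i) and (i, i sigma kappa) are parallel to i. *)
Lemma unit_sim m (u : G (D E m.+1)) :
  sim (vcomp P (unit P (tgt u)) u) u /\ sim (vcomp P u (unit P (src u))) u.
Proof.
have [xi <-] := single_glue u; set i := ginj E (tbl1 m.+1) 0.
have hd : tdim (tbl1 m.+1) <= m.+2 by apply: tdim_le => k; apply: leqW.
have [ts tt] := kappa_sec P (comp i (gtau E m)).
have [ss st] := kappa_sec P (comp i (gsig E m)).
rewrite /src /tgt /unit -!pmapM !comp_assoc.
by split; apply: (formal_composite_sim (@valid_tbl1 m.+1) hd); rewrite ?ts ?tt ?ss ?st.
Qed.

(* Inverses: the reversal u^{-1} = G(i w) xi; the formal composites with i are
   parallel to the formal units. *)
Lemma inverse_exists m (u : G (D E m.+1)) :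
  exists v, src v = tgt u /\ tgt v = src u /\
    sim (vcomp P v u) (unit P (src u)) /\ sim (vcomp P u v) (unit P (tgt u)).
Proof.
have [xi <-] := single_glue u; set i := ginj E (tbl1 m.+1) 0.
have hd : tdim (tbl1 m.+1) <= m.+2 by apply: tdim_le => k; apply: leqW.
have [rs rt] := wrev_swap P i.
have [ts tt] := kappa_sec P (comp i (gtau E m)).
have [ss st] := kappa_sec P (comp i (gsig E m)).
exists (pmap G (comp i (wrev P (ltnSn m))) xi).
rewrite /src /tgt /unit -!pmapM !comp_assoc rs rt; do 2!split => //.
by split; apply: (formal_composite_sim (@valid_tbl1 m.+1) hd); rewrite ?rs ?rt ?ts ?tt ?ss ?st.
Qed.
End InfinityGroupoid.

Theorem proposition4 (C : category) (E : glob_ext C) (P : pregroupoidal E)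
  (HC : contractible E) (G : presheaf C) (HG : is_infty_groupoid E G)
  (n : nat) (hn : 1 <= n) :
  Pi_is_groupoid G P n.-1.
Proof.
split; first by move=> u; apply: sim_refl.
split; first by move=> u v; apply: sim_sym.
split; first by move=> u v w; apply: sim_trans.
split; first by move=> u v; apply: sim_st.
split; first by move=> *; apply: vcomp_sim.
split; first by move=> *; apply: vcomp_st.
split; first by move=> x; apply: unit_st.
split; first by move=> *; apply: vcomp_assoc_sim.
split; first by move=> u; apply: unit_sim.
by move=> u; apply: inverse_exists.
Qed.
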